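(* Let $X$ be a compact ultrametric space with a finite similarity structure $\mathrm{Sim}_X$ satisfying $|\mathrm{Sim}_X(B_1,B_2)|\le1$ for all balls $B_1,B_2\subseteq X$. Then there is a linear order $\le$ on $X$ such that every $\gamma\in\mathrm{Sim}_X(B_1,B_2)$ is order-preserving, for all balls $B_1,B_2$.
   Context: Balls in $X$ are closed metric balls of positive radius. A *finite similarity structure* $\mathrm{Sim}_X$ assigns to each ordered pair of balls $B_1,B_2$ a finite (possibly empty) set $\mathrm{Sim}_X(B_1,B_2)$ of surjective similarities $B_1\to B_2$ (maps scaling all distances by a fixed positive constant), such that $\mathrm{id}_{B_1}\in\mathrm{Sim}_X(B_1,B_1)$, the sets are closed under inverses and compositions, and if $h\in\mathrm{Sim}_X(B_1,B_2)$ and $B_3\subseteq B_1$ is a ball then $h|_{B_3}\in\mathrm{Sim}_X(B_3,h(B_3))$. *)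

From Stdlib Require Import Reals List.
Open Scope R_scope.

Section Defs.
Context {X : Type} (d : X -> X -> R).

Definition is_metric : Prop :=
  (forall x y, 0 <= d x y) /\
  (forall x y, d x y = 0 <-> x = y) /\
  (forall x y, d x y = d y x) /\
  (forall x y z, d x z <= d x y + d y z).

Definition ultrametric : Prop :=
  forall x y z, d x z <= Rmax (d x y) (d y z).

Definition is_open (U : X -> Prop) : Prop :=
  forall x, U x -> exists eps, 0 < eps /\ forall y, d x y < eps -> U y.

Definition metric_compact : Prop :=
  forall (I : Type) (U : I -> X -> Prop),
    (forall i, is_open (U i)) ->
    (forall x, exists i, U i x) ->
    exists l : list I, forall x, exists i, In i l /\ U i x.

Definition is_ball (B : X -> Prop) : Prop :=
  exists c r, 0 < r /\ forall x, B x <-> d c x <= r.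

Definition set_eq (A B : X -> Prop) : Prop := forall x, A x <-> B x.
Definition subset (A B : X -> Prop) : Prop := forall x, A x -> B x.
Definition image (h : X -> X) (A : X -> Prop) : X -> Prop :=
  fun y => exists x, A x /\ h x = y.

Definition surj_similarity (B1 B2 : X -> Prop) (h : X -> X) : Prop :=
  (forall x, B1 x -> B2 (h x)) /\
  (forall y, B2 y -> exists x, B1 x /\ h x = y) /\
  (exists lam, 0 < lam /\ forall x y, B1 x -> B1 y -> d (h x) (h y) = lam * d x y).

(** Maps B1 -> B2 are represented by functions X -> X, two of them being
    identified when they agree on B1.  [Sim B1 B2 h] means that (the
    restriction to B1 of) h belongs to Sim_X(B1,B2). *)
Definition finite_similarity_structure
  (Sim : (X -> Prop) -> (X -> Prop) -> (X -> X) -> Prop) : Prop :=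
  (* Sim(B1,B2) depends only on the sets B1, B2 and the restriction h|B1 *)
  (forall B1 B2 B1' B2' h h', is_ball B1 -> is_ball B2 ->
     set_eq B1 B1' -> set_eq B2 B2' -> (forall x, B1 x -> h x = h' x) ->
     Sim B1 B2 h -> Sim B1' B2' h') /\
  (forall B1 B2 h, is_ball B1 -> is_ball B2 -> Sim B1 B2 h ->
     surj_similarity B1 B2 h) /\
  (forall B1 B2, is_ball B1 -> is_ball B2 ->
     exists l : list (X -> X), forall h, Sim B1 B2 h ->
       exists h', In h' l /\ forall x, B1 x -> h x = h' x) /\
  (forall B, is_ball B -> Sim B B (fun x => x)) /\
  (forall B1 B2 h, is_ball B1 -> is_ball B2 -> Sim B1 B2 h ->
     exists g, Sim B2 B1 g /\ (forall x, B1 x -> g (h x) = x) /\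
               (forall y, B2 y -> h (g y) = y)) /\
  (forall B1 B2 B3 h g, is_ball B1 -> is_ball B2 -> is_ball B3 ->
     Sim B1 B2 h -> Sim B2 B3 g -> Sim B1 B3 (fun x => g (h x))) /\
  (forall B1 B2 B3 h, is_ball B1 -> is_ball B2 -> is_ball B3 ->
     subset B3 B1 -> Sim B1 B2 h -> Sim B3 (image h B3) h).

End Defs.

Definition linear_order {X : Type} (le : X -> X -> Prop) : Prop :=
  (forall x, le x x) /\
  (forall x y, le x y -> le y x -> x = y) /\
  (forall x y z, le x y -> le y z -> le x z) /\
  (forall x y, le x y \/ le y x).

Definition order_preserving_on {X : Type} (le : X -> X -> Prop)
  (B : X -> Prop) (h : X -> X) : Prop :=
  forall x y, B x -> B y -> le x y -> le (h x) (h y).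

(** - In an ultrametric space two points u, v of a ball B lie in the same
      child of B (maximal proper sub-ball) when d u v is smaller than some
      distance realised in B; this is an equivalence relation on B.
    - By compactness a ball has finitely many children.  Fixing a finite list
      of representatives, we preorder the points of B by the position of
      their child in that list; u and v are equivalent for this preorder
      exactly when they are equal or lie in the same child.
    - We choose one representative ball in every similarity class and
      transport its preorder to each ball of the class along the similarity
      onto the representative.  Since that similarity is unique, the
      transported preorder is well defined and similarity invariant.
    - Distinct points x, y are compared in the smallest ball [span x y]
      containing both, where they lie in different children.  The
      ultrametric inequality makes this relation transitive, and since
      similarities map spans onto spans it is preserved by them. *)

From Stdlib Require Import Reals List Lra Lia Wf_nat.
From Stdlib Require Import Classical ClassicalEpsilon FunctionalExtensionality PropExtensionality.
Open Scope R_scope.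

Lemma set_ext {X : Type} (A B : X -> Prop) : (forall x, A x <-> B x) -> A = B.
Proof.
  intro HAB. apply functional_extensionality; intro x.
  apply propositional_extensionality; auto.
Qed.

Section Ultrametric.
Context {X : Type} (d : X -> X -> R).
Hypothesis Hmet : is_metric d.
Hypothesis Hult : ultrametric d.

Lemma dist_nonneg x y : 0 <= d x y. Proof. apply Hmet. Qed.
Lemma dist_eq0 x y : d x y = 0 <-> x = y. Proof. apply Hmet. Qed.
Lemma dist_sym x y : d x y = d y x. Proof. apply Hmet. Qed.
Lemma dist_refl x : d x x = 0. Proof. now apply dist_eq0. Qed.

Lemma dist_pos x y : x <> y -> 0 < d x y.
Proof.
  intro Hxy. destruct (dist_nonneg x y) as [Hlt | Heq]; auto.
  exfalso. apply Hxy, dist_eq0. auto.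
Qed.

Lemma ultra_cases x y z : d x z <= d x y \/ d x z <= d y z.
Proof.
  pose proof (Hult x y z) as H. unfold Rmax in H.
  destruct (Rle_dec (d x y) (d y z)); auto.
Qed.

Lemma ultra_isosceles x y z : d x y < d y z -> d x z = d y z.
Proof.
  intro Hlt. pose proof (dist_sym y x). apply Rle_antisym.
  - destruct (ultra_cases x y z); lra.
  - destruct (ultra_cases y x z); lra.
Qed.

(** Every point of a ball is a centre: a ball contains all points that are
    as close to one of its points as two of its points are to each other. *)
Lemma ball_absorbs B x p q w :
  is_ball d B -> B x -> B p -> B q -> d x w <= d p q -> B w.
Proof.
  intros (c & r & Hr & HB) Bx Bp Bq Hw.
  apply HB in Bx; apply HB in Bp; apply HB in Bq. apply HB.
  assert (d p q <= r).
  { rewrite (dist_sym c p) in Bp. destruct (ultra_cases p c q); lra. }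
  destruct (ultra_cases c x w); lra.
Qed.

(** [same_child B u v]: u and v are closer than some two points of B, i.e.
    they lie in a common maximal proper sub-ball of B. *)
Definition same_child (B : X -> Prop) (u v : X) : Prop :=
  exists p q, B p /\ B q /\ d u v < d p q.

Lemma same_child_sym B u v : same_child B u v -> same_child B v u.
Proof. intros (p & q & Bp & Bq & H). exists p, q. now rewrite dist_sym. Qed.

Lemma same_child_trans B u v w :
  same_child B u v -> same_child B v w -> same_child B u w.
Proof.
  intros (p & q & Bp & Bq & H) (p' & q' & Bp' & Bq' & H').
  destruct (ultra_cases u v w).
  - exists p, q. repeat split; auto. lra.
  - exists p', q'. repeat split; auto. lra.
Qed.

(** The closed ball around x of radius d x y, i.e. the smallest ball
    containing x and y. *)
Definition span (x y : X) : X -> Prop := fun z => d x z <= d x y.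

Lemma span_ball x y : x <> y -> is_ball d (span x y).
Proof.
  intro Hxy. exists x, (d x y). split; [now apply dist_pos |]. now intro.
Qed.

Lemma span_left x y : span x y x.
Proof. unfold span. rewrite dist_refl. apply dist_nonneg. Qed.

Lemma span_right x y : span x y y.
Proof. unfold span. lra. Qed.

Lemma span_sym x y : span x y = span y x.
Proof.
  assert (Hincl : forall x y z, span x y z -> span y x z).
  { unfold span. intros a b z Hz. pose proof (dist_sym b a).
    destruct (ultra_cases b a z); lra. }
  apply set_ext; split; apply Hincl.
Qed.

Lemma same_child_span x y u v : same_child (span x y) u v <-> d u v < d x y.
Proof.
  unfold span. split.
  - intros (p & q & Bp & Bq & H). pose proof (dist_sym p x).
    destruct (ultra_cases p x q); lra.
  - intro H. exists x, y. rewrite dist_refl.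
    repeat split; auto using dist_nonneg; lra.
Qed.

Lemma span_of_split B x y :
  is_ball d B -> B x -> B y -> ~ same_child B x y -> span x y = B.
Proof.
  intros HB Bx By Hsplit. apply set_ext. intro w. split; intro Hw.
  - now apply (ball_absorbs B x x y w).
  - apply Rnot_lt_le. intro Hlt. apply Hsplit. now exists x, w.
Qed.

Lemma open_union (U V : X -> Prop) :
  is_open d U -> is_open d V -> is_open d (fun x => U x \/ V x).
Proof.
  intros HU HV x [Ux | Vx].
  - destruct (HU x Ux) as (eps & Heps & H). exists eps. split; auto.
  - destruct (HV x Vx) as (eps & Heps & H). exists eps. split; auto.
Qed.

Lemma ball_complement_open B : is_ball d B -> is_open d (fun v => ~ B v).
Proof.
  intros (c & r & Hr & HB) v nBv.
  assert (Hout : r < d c v).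
  { apply Rnot_le_lt. intro H. now apply nBv, HB. }
  exists (d c v - r). split; [lra |]. intros y Hy By. apply HB in By.
  pose proof (dist_sym y v). destruct (ultra_cases c y v); lra.
Qed.

Lemma child_open B u : is_ball d B -> is_open d (fun v => B v /\ same_child B u v).
Proof.
  intros HB v [Bv (p & q & Bp & Bq & Huv)].
  exists (d p q - d u v). split; [lra |]. intros y Hy.
  pose proof (dist_nonneg u v). split.
  - apply (ball_absorbs B v p q y); auto. lra.
  - exists p, q. repeat split; auto. destruct (ultra_cases u v y); lra.
Qed.


Section ChildOrder.
Hypothesis Hcpt : metric_compact d.

Definition nondegenerate (B : X -> Prop) : Prop := exists p q, B p /\ B q /\ p <> q.

Definition child_reps (B : X -> Prop) (l : list X) : Prop :=
  nondegenerate B -> forall u, B u ->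
    exists i w, nth_error l i = Some w /\ same_child B w u.

(** A ball has finitely many children: they form an open cover of the ball,
    which is closed in the compact space X. *)
Lemma child_reps_exist B : is_ball d B -> exists l, child_reps B l.
Proof.
  intro HB. destruct (classic (nondegenerate B)) as [Hnd | Hdeg]; [| now exists nil].
  destruct Hnd as (p & q & Bp & Bq & Hpq).
  destruct (Hcpt X (fun u v => (B v /\ same_child B u v) \/ ~ B v)) as [l Hl].
  - intro u. apply open_union; [now apply child_open | now apply ball_complement_open].
  - intro v. exists v. destruct (classic (B v)) as [Bv | nBv]; [left | right]; auto.
    split; auto. exists p, q. rewrite dist_refl. repeat split; auto. now apply dist_pos.
  - exists l. intros _ u Bu.
    destruct (Hl u) as (w & Hw & [[_ Hwu] | nBu]); [| contradiction].
    destruct (In_nth_error _ _ Hw) as [i Hi]. now exists i, w.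
Qed.

Definition child_list (B : X -> Prop) : list X :=
  epsilon (inhabits nil) (child_reps B).

Lemma child_list_spec B : is_ball d B -> child_reps B (child_list B).
Proof. intro HB. unfold child_list. apply epsilon_spec, child_reps_exist, HB. Qed.

Definition child_order (B : X -> Prop) (u v : X) : Prop :=
  forall i w, nth_error (child_list B) i = Some w -> same_child B w v ->
    exists j w', (j <= i)%nat /\ nth_error (child_list B) j = Some w' /\
                 same_child B w' u.

Lemma child_order_total B u v : child_order B u v \/ child_order B v u.
Proof.
  destruct (classic (child_order B u v)) as [Huv | Huv]; [now left | right].
  apply not_all_ex_not in Huv as [i Huv]. apply not_all_ex_not in Huv as [w Huv].
  apply imply_to_and in Huv as [Hi Huv]. apply imply_to_and in Huv as [Hwv Huv].
  intros k w' Hk Hw'u. exists i, w. repeat split; auto.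
  apply Nat.nlt_ge. intro Hlt. apply Huv. exists k, w'. repeat split; auto. lia.
Qed.

Lemma child_order_trans B u v w :
  child_order B u v -> child_order B v w -> child_order B u w.
Proof.
  intros Huv Hvw i a Hi Haw.
  destruct (Hvw i a Hi Haw) as (j & b & Hj & Hb & Hbv).
  destruct (Huv j b Hb Hbv) as (k & c & Hk & Hc & Hcu).
  exists k, c. repeat split; auto. lia.
Qed.

Lemma child_order_of_same_child B u v : same_child B u v -> child_order B u v.
Proof.
  intros Huv i w Hi Hwv. exists i, w. repeat split; auto.
  eapply same_child_trans; [exact Hwv | now apply same_child_sym].
Qed.

(** Points equivalent for the preorder are equal or lie in the same child:
    both lie in the child of the first listed representative of u's child. *)
Lemma child_order_antisym B u v : is_ball d B -> B u -> B v ->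
  child_order B u v -> child_order B v u -> u = v \/ same_child B u v.
Proof.
  intros HB Bu Bv Huv Hvu.
  destruct (classic (nondegenerate B)) as [Hnd | Hdeg].
  2: { left. apply NNPP. intro Hneq. apply Hdeg. now exists u, v. }
  right.
  set (first_u := fun i =>
    exists w, nth_error (child_list B) i = Some w /\ same_child B w u).
  destruct (dec_inh_nat_subset_has_unique_least_element first_u)
    as (i0 & ((w0 & Hi0 & Hw0u) & Hmin) & _).
  - intro n. apply classic.
  - destruct (child_list_spec B HB Hnd u Bu) as (i & w & Hi & Hwu). now exists i, w.
  - destruct (Hvu i0 w0 Hi0 Hw0u) as (j & w1 & Hj & Hj1 & Hw1v).
    destruct (Huv j w1 Hj1 Hw1v) as (k & w2 & Hk & Hk2 & Hw2u).
    assert (i0 <= k)%nat by (apply Hmin; now exists w2).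
    assert (j = i0) by lia. subst j.
    rewrite Hi0 in Hj1. injection Hj1 as <-.
    eapply same_child_trans; [apply same_child_sym, Hw0u | exact Hw1v].
Qed.


Section Similarity.
Variable Sim : (X -> Prop) -> (X -> Prop) -> (X -> X) -> Prop.
Hypothesis HSim : finite_similarity_structure d Sim.
Hypothesis Hone : forall B1 B2 h h', is_ball d B1 -> is_ball d B2 ->
  Sim B1 B2 h -> Sim B1 B2 h' -> forall x, B1 x -> h x = h' x.

Lemma sim_id B : is_ball d B -> Sim B B (fun x => x).
Proof. destruct HSim as (_ & _ & _ & H & _). apply H. Qed.

Lemma sim_similarity B1 B2 h : is_ball d B1 -> is_ball d B2 -> Sim B1 B2 h ->
  surj_similarity d B1 B2 h.
Proof. destruct HSim as (_ & H & _). apply H. Qed.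

Lemma sim_inv B1 B2 h : is_ball d B1 -> is_ball d B2 -> Sim B1 B2 h ->
  exists g, Sim B2 B1 g /\ (forall x, B1 x -> g (h x) = x) /\
            (forall y, B2 y -> h (g y) = y).
Proof. destruct HSim as (_ & _ & _ & _ & H & _). apply H. Qed.

Lemma sim_comp B1 B2 B3 h g : is_ball d B1 -> is_ball d B2 -> is_ball d B3 ->
  Sim B1 B2 h -> Sim B2 B3 g -> Sim B1 B3 (fun x => g (h x)).
Proof. destruct HSim as (_ & _ & _ & _ & _ & H & _). apply H. Qed.

Lemma sim_restrict B1 B2 B3 h : is_ball d B1 -> is_ball d B2 -> is_ball d B3 ->
  subset B3 B1 -> Sim B1 B2 h -> Sim B3 (image h B3) h.
Proof. destruct HSim as (_ & _ & _ & _ & _ & _ & H). apply H. Qed.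

Lemma sim_injective B B' g u v : is_ball d B -> is_ball d B' -> Sim B B' g ->
  B u -> B v -> g u = g v -> u = v.
Proof.
  intros HB HB' Hg Bu Bv Heq.
  destruct (sim_similarity B B' g) as (_ & _ & lam & Hlam & Hd); auto.
  apply dist_eq0. pose proof (Hd u v Bu Bv) as Huv. rewrite Heq, dist_refl in Huv.
  symmetry in Huv. apply Rmult_integral in Huv as [? | ?]; auto. lra.
Qed.

Lemma sim_same_child B B' g u v : is_ball d B -> is_ball d B' -> Sim B B' g ->
  B u -> B v -> same_child B u v <-> same_child B' (g u) (g v).
Proof.
  intros HB HB' Hg Bu Bv.
  destruct (sim_similarity B B' g) as (Hin & Hsurj & lam & Hlam & Hd); auto.
  split.
  - intros (p & q & Bp & Bq & H). exists (g p), (g q). repeat split; auto.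
    rewrite !Hd; auto. now apply Rmult_lt_compat_l.
  - intros (p' & q' & Bp' & Bq' & H).
    destruct (Hsurj _ Bp') as (p & Bp & <-). destruct (Hsurj _ Bq') as (q & Bq & <-).
    exists p, q. repeat split; auto.
    rewrite !Hd in H; auto. now apply Rmult_lt_reg_l in H.
Qed.

Lemma sim_image_span B1 B2 h x y : is_ball d B1 -> is_ball d B2 -> Sim B1 B2 h ->
  B1 x -> B1 y -> image h (span x y) = span (h x) (h y).
Proof.
  intros HB1 HB2 Hh Bx By.
  destruct (sim_similarity B1 B2 h) as (Hin & Hsurj & lam & Hlam & Hd); auto.
  assert (Hsub : forall z, span x y z -> B1 z)
    by (intros z Hz; now apply (ball_absorbs B1 x x y z)).
  apply set_ext. intro w. unfold image, span. split.
  - intros (z & Hz & <-). rewrite !Hd; auto. apply Rmult_le_compat_l; [lra | exact Hz].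
  - intro Hw.
    assert (B2w : B2 w) by now apply (ball_absorbs B2 (h x) (h x) (h y) w); auto.
    destruct (Hsurj w B2w) as (z & Bz & <-). exists z. split; auto.
    rewrite !Hd in Hw; auto. now apply Rmult_le_reg_l in Hw.
Qed.

Definition similar (B B' : X -> Prop) : Prop := is_ball d B' /\ exists g, Sim B B' g.

Definition rep (B : X -> Prop) : X -> Prop :=
  epsilon (inhabits (fun _ => True)) (similar B).

Lemma rep_spec B : is_ball d B -> is_ball d (rep B) /\ exists g, Sim B (rep B) g.
Proof.
  intro HB. unfold rep. apply epsilon_spec.
  exists B. split; auto. exists (fun x => x). now apply sim_id.
Qed.

Lemma rep_invariant B B' h : is_ball d B -> is_ball d B' -> Sim B B' h -> rep B = rep B'.
Proof.
  intros HB HB' Hh. unfold rep. f_equal. apply set_ext. intro B0.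
  unfold similar. split; intros [HB0 [g Hg]]; split; auto.
  - destruct (sim_inv B B' h) as (k & Hk & _); auto.
    exists (fun x => g (k x)). now apply (sim_comp B' B B0 k g).
  - exists (fun x => g (h x)). now apply (sim_comp B B' B0 h g).
Qed.

Definition ball_order (B : X -> Prop) (u v : X) : Prop :=
  exists g, Sim B (rep B) g /\ child_order (rep B) (g u) (g v).

(** By uniqueness of similarities, any similarity onto the representative
    computes the ball order. *)
Lemma ball_order_via B g u v : is_ball d B -> Sim B (rep B) g -> B u -> B v ->
  ball_order B u v -> child_order (rep B) (g u) (g v).
Proof.
  intros HB Hg Bu Bv (g' & Hg' & Hord). destruct (rep_spec B HB) as [HR _].
  now rewrite (Hone _ _ _ _ HB HR Hg Hg' u Bu), (Hone _ _ _ _ HB HR Hg Hg' v Bv).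
Qed.

Lemma ball_order_total B u v : is_ball d B -> ball_order B u v \/ ball_order B v u.
Proof.
  intro HB. destruct (rep_spec B HB) as [_ [g Hg]].
  destruct (child_order_total (rep B) (g u) (g v)); [left | right]; now exists g.
Qed.

Lemma ball_order_trans B u v w : is_ball d B -> B u -> B v -> B w ->
  ball_order B u v -> ball_order B v w -> ball_order B u w.
Proof.
  intros HB Bu Bv Bw Huv Hvw. destruct (rep_spec B HB) as [_ [g Hg]].
  exists g. split; auto.
  apply (child_order_trans _ _ (g v)); now apply ball_order_via.
Qed.

Lemma ball_order_of_same_child B u v : is_ball d B -> B u -> B v ->
  same_child B u v -> ball_order B u v.
Proof.
  intros HB Bu Bv Huv. destruct (rep_spec B HB) as [HR [g Hg]].
  exists g. split; auto. apply child_order_of_same_child.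
  now apply (sim_same_child B (rep B) g).
Qed.

Lemma ball_order_antisym B u v : is_ball d B -> B u -> B v ->
  ball_order B u v -> ball_order B v u -> u = v \/ same_child B u v.
Proof.
  intros HB Bu Bv Huv Hvu. destruct (rep_spec B HB) as [HR [g Hg]].
  destruct (sim_similarity B (rep B) g) as (Hin & _); auto.
  destruct (child_order_antisym (rep B) (g u) (g v)) as [Heq | Hsc];
    auto using ball_order_via.
  - left. now apply (sim_injective B (rep B) g).
  - right. now apply (sim_same_child B (rep B) g).
Qed.

Lemma ball_order_transport B B' h u v : is_ball d B -> is_ball d B' -> Sim B B' h ->
  B u -> B v -> ball_order B u v -> ball_order B' (h u) (h v).
Proof.
  intros HB HB' Hh Bu Bv (g & Hg & Hord). destruct (rep_spec B HB) as [HR _].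
  destruct (sim_inv B B' h) as (k & Hk & Hkh & _); auto.
  exists (fun x => g (k x)). rewrite <- (rep_invariant B B' h); auto. split.
  - now apply (sim_comp B' B (rep B) k g).
  - now rewrite !Hkh.
Qed.


Lemma ball_order_no_gap B x y z : is_ball d B -> B x -> B y -> B z -> x <> y ->
  ~ same_child B x y -> ball_order B x y -> ball_order B y z -> ~ same_child B x z.
Proof.
  intros HB Bx By Bz Nxy Hsplit Hxy Hyz Hxz.
  assert (Hyx : ball_order B y x).
  { apply (ball_order_trans B y z x); auto.
    apply ball_order_of_same_child; auto. now apply same_child_sym. }
  now destruct (ball_order_antisym B x y).
Qed.

Definition sim_order (x y : X) : Prop := x = y \/ ball_order (span x y) x y.

Lemma sim_order_in_ball B x y : is_ball d B -> B x -> B y -> x <> y ->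
  ~ same_child B x y -> sim_order x y <-> ball_order B x y.
Proof.
  intros HB Bx By Hxy Hsplit. unfold sim_order.
  rewrite (span_of_split B x y); auto. split; [intros [? | ?] | right]; tauto.
Qed.

Lemma sim_order_chain B x y z : is_ball d B -> B x -> B y -> B z -> x <> z ->
  ~ same_child B x z -> ball_order B x y -> ball_order B y z -> sim_order x z.
Proof.
  intros HB Bx By Bz Hxz Hsplit Hxy Hyz.
  apply (sim_order_in_ball B); auto. now apply (ball_order_trans B x y z).
Qed.

Lemma sim_order_antisym x y : sim_order x y -> sim_order y x -> x = y.
Proof.
  intros [Heq | Hxy] [Heq' | Hyx]; auto.
  apply NNPP. intro Hneq. rewrite span_sym in Hyx.
  destruct (ball_order_antisym (span x y) x y) as [? | Hsc];
    auto using span_ball, span_left, span_right.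
  apply same_child_span in Hsc. lra.
Qed.

Lemma sim_order_total x y : sim_order x y \/ sim_order y x.
Proof.
  destruct (classic (x = y)) as [Heq | Hneq]; [now left; left |].
  destruct (ball_order_total (span x y) x y) as [? | Hyx]; auto using span_ball.
  - now left; right.
  - right; right. now rewrite span_sym.
Qed.

(** Transitivity: the three points are compared in the span of the two
    farthest apart, in which the outer points x, z lie in different children. *)
Lemma sim_order_trans x y z : sim_order x y -> sim_order y z -> sim_order x z.
Proof.
  intros [<- | Hxy]; auto. intros [<- | Hyz]; [now right |].
  destruct (classic (x = z)) as [Hxz | Nxz]; [now left |].
  destruct (classic (x = y)) as [<- | Nxy]; [now right |].
  destruct (classic (y = z)) as [<- | Nyz]; [now right |].
  pose proof (dist_sym x y). pose proof (dist_sym y z). pose proof (dist_sym x z).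
  destruct (Rtotal_order (d x y) (d y z)) as [Hlt | [Heq | Hgt]].
  - (* the ball is span y z, in which x and y share a child *)
    pose proof (ultra_isosceles x y z Hlt).
    apply (sim_order_chain (span y z) x y z); auto using span_ball, span_left, span_right.
    + unfold span. lra.
    + rewrite same_child_span. lra.
    + apply ball_order_of_same_child; auto using span_ball, span_left.
      * unfold span. lra.
      * apply same_child_span. lra.
  - (* span x y = span y z, and x, z cannot share a child *)
    assert (Bz : span x y z) by (unfold span; destruct (ultra_cases x y z); lra).
    assert (Hspan : span y z = span x y).
    { apply span_of_split; auto using span_ball, span_right.
      rewrite same_child_span. lra. }
    rewrite Hspan in Hyz.
    apply (sim_order_chain (span x y) x y z); auto using span_ball, span_left, span_right.
    apply (ball_order_no_gap _ x y z); auto using span_ball, span_left, span_right.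
    rewrite same_child_span. lra.
  - (* the ball is span x y, in which y and z share a child *)
    assert (Hiso : d z x = d y x) by (apply ultra_isosceles; lra).
    apply (sim_order_chain (span x y) x y z); auto using span_ball, span_left, span_right.
    + unfold span. lra.
    + rewrite same_child_span. lra.
    + apply ball_order_of_same_child; auto using span_ball, span_right.
      * unfold span. lra.
      * apply same_child_span. lra.
Qed.

(** Similarities preserve the order, since they map the span of x, y onto
    the span of their images and preserve ball orders. *)
Lemma sim_order_preserved B1 B2 h : is_ball d B1 -> is_ball d B2 -> Sim B1 B2 h ->
  order_preserving_on sim_order B1 h.
Proof.
  intros HB1 HB2 Hh x y Bx By [<- | Hxy]; [now left |].
  destruct (classic (x = y)) as [<- | Nxy]; [now left |]. right.
  assert (Nhxy : h x <> h y) by (intro Heq; now apply Nxy, (sim_injective B1 B2 h)).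
  assert (Hsub : subset (span x y) B1)
    by (intros w Hw; now apply (ball_absorbs B1 x x y w)).
  pose proof (sim_restrict B1 B2 (span x y) h HB1 HB2 (span_ball x y Nxy) Hsub Hh) as Hres.
  rewrite (sim_image_span B1 B2 h x y) in Hres; auto.
  apply (ball_order_transport (span x y) _ h); auto using span_ball, span_left, span_right.
Qed.

End Similarity.
End ChildOrder.
End Ultrametric.

Theorem lemma9p14 (X : Type) (d : X -> X -> R)
  (Sim : (X -> Prop) -> (X -> Prop) -> (X -> X) -> Prop)
  (Hmet : is_metric d) (Hult : ultrametric d) (Hcpt : metric_compact d)
  (HSim : finite_similarity_structure d Sim)
  (Hone : forall B1 B2 h h', is_ball d B1 -> is_ball d B2 ->
     Sim B1 B2 h -> Sim B1 B2 h' -> forall x, B1 x -> h x = h' x) :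
  exists le : X -> X -> Prop, linear_order le /\
    forall B1 B2 h, is_ball d B1 -> is_ball d B2 -> Sim B1 B2 h ->
      order_preserving_on le B1 h.
Proof.
  exists (sim_order d Sim). split; [repeat split |].
  - intro x. now left.
  - intros x y. now apply sim_order_antisym.
  - intros x y z. now apply sim_order_trans.
  - intros x y. now apply sim_order_total.
  - intros B1 B2 h. now apply sim_order_preserved.
Qed.
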